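(* For every $M>0$, no deterministic algorithm can achieve a competitive ratio better than $\frac{1}{M}$ for online Submodular Welfare in the adversarial setting with general (not necessarily monotone) non-negative submodular utilities.
   Context: A set function $f:2^{\mathcal N}\to\mathbb R_{\ge 0}$ is submodular if $f(A\cup B)+f(A\cap B)\le f(A)+f(B)$ for all $A,B\subseteq\mathcal N$. Online Submodular Welfare: there are $n$ bidders, bidder $j$ having a non-negative submodular (not necessarily monotone) utility $f_j$ over a set $\mathcal N$ of items that arrive one by one. When an item arrives, the algorithm must immediately and irrevocably assign it to one bidder or discard it; the goal is to maximize $\sum_j f_j(S_j)$, where $S_j$ is the set of items assigned to bidder $j$ (pairwise disjoint). Utilities are accessed via value oracles, and upon an item's arrival the algorithm may only query sets of items that already arrived. In the adversarial setting an adversary chooses the arrival order (and, since only queries on arrived items are possible, the instance may depend on the algorithm's earlier decisions). An algorithm has competitive ratio $\alpha$ if on every instance its value is at least $\alpha$ times the optimal offline value. *)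

From HB Require Import structures.
From mathcomp Require Import all_boot all_order all_algebra.
From mathcomp Require Import reals.
Set Implicit Arguments. Unset Strict Implicit. Unset Printing Implicit Defensive.
Import Order.TTheory GRing.Theory Num.Theory.
Local Open Scope ring_scope.

Section Defs.
Variable R : realType.

(* Items are indexed 0..m-1 in arrival order; bidders are 'I_n. *)

Definition nonneg_submodular (T : finType) (f : {set T} -> R) : Prop :=
  (forall A, 0 <= f A) /\
  (forall A B, f (A :|: B) + f (A :&: B) <= f A + f B).

(* A deterministic online algorithm: when the item with arrival index k
   arrives, it knows the number of bidders n and can only query the value
   oracles of the bidders on subsets of the items arrived so far, i.e. of
   {0,..,k} (represented as 'I_k.+1).  It answers [Some j] (assign to
   bidder j) or [None] (discard).  It does not know the total number of
   items.  Its earlier decisions are functions of earlier (restricted)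
   oracles, hence recomputable; adaptivity of the adversary is subsumed
   since the algorithm is deterministic. *)
Definition online_alg : Type :=
  forall (n k : nat), ('I_n -> {set 'I_k.+1} -> R) -> option 'I_n.

Definition restrict_oracle n m (f : 'I_n -> {set 'I_m} -> R) (i : 'I_m)
  : 'I_n -> {set 'I_(nat_of_ord i).+1} -> R :=
  fun j S => f j [set widen_ord (ltn_ord i) x | x in S].

Definition alg_decision (A : online_alg) n m (f : 'I_n -> {set 'I_m} -> R)
  (i : 'I_m) : option 'I_n :=
  @A n (nat_of_ord i) (@restrict_oracle n m f i).

Definition welfare n m (f : 'I_n -> {set 'I_m} -> R)
  (sigma : 'I_m -> option 'I_n) : R :=
  \sum_(j < n) f j [set i | sigma i == Some j].

Definition alg_value (A : online_alg) n m (f : 'I_n -> {set 'I_m} -> R) : R :=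
  welfare f (alg_decision A f).

(* Optimal offline value: max over all assignments (values are >= 0). *)
Definition opt_value n m (f : 'I_n -> {set 'I_m} -> R) : R :=
  \big[Order.max/0]_(sigma : {ffun 'I_m -> option 'I_n}) welfare f sigma.

Definition competitive (A : online_alg) (alpha : R) : Prop :=
  forall (n m : nat) (f : 'I_n -> {set 'I_m} -> R),
    (forall j, nonneg_submodular (f j)) ->
    alpha * opt_value f <= alg_value A f.

End Defs.

(** A deterministic algorithm must decide on the first item knowing only that
    it is worth 1, and the adversary completes the instance after seeing the
    decision.  If it keeps the item, the second item turns out to be worth
    [M] alone but to cancel the first one, so the algorithm ends with at most 1
    while assigning only the second item yields [M].  If it discards the item,
    the second item turns out to be worthless, so the algorithm ends with 0
    while keeping the first item yields 1. *)
From HB Require Import structures.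
From mathcomp Require Import all_boot all_order all_algebra.
From mathcomp Require Import reals.
From mathcomp Require Import boolp lra.
Set Implicit Arguments. Unset Strict Implicit. Unset Printing Implicit Defensive.
Import Order.TTheory GRing.Theory Num.Theory.
Local Open Scope ring_scope.

Section OnlineModel.
Variable R : realType.

Lemma welfare_le_opt_value n m (f : 'I_n -> {set 'I_m} -> R)
    (sigma : {ffun 'I_m -> option 'I_n}) :
  welfare f sigma <= opt_value f.
Proof. exact: le_bigmax. Qed.

Lemma competitive_welfare_le (A : online_alg R) (alpha : R) :
  competitive A alpha -> 0 <= alpha ->
  forall n m (f : 'I_n -> {set 'I_m} -> R) (sigma : {ffun 'I_m -> option 'I_n}),
  (forall j, nonneg_submodular (f j)) ->
  alpha * welfare f sigma <= alg_value A f.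
Proof.
move=> compA alpha_ge0 n m f sigma fP; apply: le_trans (compA _ _ _ fP).
by rewrite ler_wpM2l // welfare_le_opt_value.
Qed.

Lemma alg_decision_prefix (A : online_alg R) n m
    (f g : 'I_n -> {set 'I_m} -> R) (i : 'I_m) :
  (forall j (S : {set 'I_m}),
     S \subset [set x : 'I_m | (x <= i)%N] -> f j S = g j S) ->
  alg_decision A f i = alg_decision A g i.
Proof.
move=> fg; rewrite /alg_decision /restrict_oracle; congr (A _ _ _).
apply/funext => j; apply/funext => S.
apply: fg; apply/subsetP => _ /imsetP[x _ ->].
by rewrite inE /= -ltnS ltn_ord.
Qed.

Lemma welfare_one_bidder m (f : 'I_1 -> {set 'I_m} -> R)
    (sigma : 'I_m -> option 'I_1) :
  welfare f sigma = f ord0 [set i | sigma i].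
Proof.
rewrite /welfare big_ord1; congr (f _ _); apply/setP => i; rewrite !inE.
by case: (sigma i) => // j; rewrite (ord1 j) eqxx.
Qed.

End OnlineModel.

Section TwoItemInstances.
Variables (R : realType) (M : R).
Hypothesis M_gt0 : 0 < M.

Definition first_item_utility (j : 'I_1) (S : {set 'I_2}) : R :=
  (ord0 \in S)%:R.

Definition trap_utility (j : 'I_1) (S : {set 'I_2}) : R :=
  ((ord0 \in S) && (ord_max \notin S))%:R
  + M * ((ord_max \in S) && (ord0 \notin S))%:R.

Lemma first_item_utility_submodular j :
  nonneg_submodular (first_item_utility j).
Proof.
split=> [S | S T]; rewrite /first_item_utility ?inE ?ler0n //.
by case: (ord0 \in S); case: (ord0 \in T) => /=; lra.
Qed.

Lemma trap_utility_submodular j : nonneg_submodular (trap_utility j).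
Proof.
split=> [S | S T]; rewrite /trap_utility ?inE; have := M_gt0.
  by case: (ord0 \in S); case: (ord_max \in S) => /=; lra.
by case: (ord0 \in S); case: (ord_max \in S); case: (ord0 \in T);
   case: (ord_max \in T) => /=; lra.
Qed.

Lemma trap_utility_le1 j (S : {set 'I_2}) :
  ord0 \in S -> trap_utility j S <= 1.
Proof. by rewrite /trap_utility => ->; case: (ord_max \in S) => /=; lra. Qed.

Lemma alg_decision_first_item (A : online_alg R) :
  alg_decision A first_item_utility ord0 = alg_decision A trap_utility ord0.
Proof.
apply: alg_decision_prefix => j S /subsetP S0.
have S1 : ord_max \notin S by apply/negP => /S0; rewrite inE.
by rewrite /first_item_utility /trap_utility (negbTE S1) andbT /= mulr0 addr0.
Qed.

Lemma competitive_first_item_discarded (A : online_alg R) (alpha : R) :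
  competitive A alpha -> 0 <= alpha ->
  ~~ alg_decision A first_item_utility ord0 -> alpha <= 0.
Proof.
move=> compA alpha_ge0 discarded.
have := competitive_welfare_le compA alpha_ge0 [ffun=> Some ord0]
  first_item_utility_submodular.
rewrite /alg_value !welfare_one_bidder /first_item_utility !inE ffunE.
by rewrite (negbTE discarded) mulr1.
Qed.

Lemma competitive_trap_kept (A : online_alg R) (alpha : R) :
  competitive A alpha -> 0 <= alpha ->
  alg_decision A trap_utility ord0 -> alpha * M <= 1.
Proof.
move=> compA alpha_ge0 kept.
pose last_only : {ffun 'I_2 -> option 'I_1} :=
  [ffun i => if i == ord_max then Some ord0 else None].
have last_onlyE : [set i | last_only i] = [set ord_max].
  by apply/setP => i; rewrite !inE ffunE; case: (i == ord_max).
have := competitive_welfare_le compA alpha_ge0 last_only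
  trap_utility_submodular.
rewrite /alg_value !welfare_one_bidder last_onlyE.
have -> : trap_utility ord0 [set ord_max] = M.
  by rewrite /trap_utility !inE eqxx /= mulr1 add0r.
move=> le_alg; apply: le_trans le_alg _.
by rewrite trap_utility_le1 // inE.
Qed.

End TwoItemInstances.

Theorem theorem2 (R : realType) (M : R) :
  0 < M ->
  forall (A : online_alg R) (alpha : R), competitive A alpha -> alpha <= M^-1.
Proof.
move=> M_gt0 A alpha compA.
have [alpha_le0 | alpha_gt0] := lerP alpha 0.
  by apply: le_trans alpha_le0 _; rewrite invr_ge0 ltW.
have alpha_ge0 := ltW alpha_gt0.
have [kept | discarded] := boolP (alg_decision A (trap_utility M) ord0 : bool).
  rewrite -(ler_pM2r M_gt0) mulVf ?gt_eqF //.
  exact: (competitive_trap_kept M_gt0 compA alpha_ge0 kept).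
rewrite -alg_decision_first_item in discarded.
by have := competitive_first_item_discarded compA alpha_ge0 discarded; lra.
Qed.
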